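(* Let $\mathcal{G}$ be a groupoid, $\mathbb{K}$ a field, $S$ a $\mathbb{K}$-cancellative semigroup and $\Gamma:\mathcal{G}\to S$ a partial projective representation with factor set $\sigma$ and $D=\mathrm{dom}\,\sigma$, such that $\Gamma(r(x))\Gamma(x)=\Gamma(x)=\Gamma(x)\Gamma(d(x))$ for all $x\in\mathcal{G}$. If $(x,y) \in D$, then $(x,d(x)),(r(y),y) \in D$ and $$\sigma(x,d(x)) = \sigma(r(x),x) = \sigma(y,d(y)) = \sigma(r(y),y) = 1.$$
   Context: A groupoid is a nonempty set $\mathcal{G}$ with a partial associative product, each $g$ having right identity $d(g)=g^{-1}g$, left identity $r(g)=gg^{-1}$ and inverse $g^{-1}$; $xy$ is defined ($\exists xy$) iff $d(x)=r(y)$; $\mathcal{G}_0$ identities, $\mathcal{G}^2$ composable pairs. A $\mathbb{K}$-semigroup is a semigroup $S$ with zero with a scalar action $\mathbb{K}\times S\to S$ satisfying $\alpha(\beta x)=(\alpha\beta)x$, $1x=x$, $\alpha(xy)=(\alpha x)y=x(\alpha y)$, $0x=0$; it is $\mathbb{K}$-cancellative if $\alpha x=\beta x$, $x\ne0$ imply $\alpha=\beta$. Let $\mathcal{P}(S)=S/\lambda$ where $x\lambda y$ iff $x=\alpha y$ for some $\alpha\in\mathbb{K}^*$, and $\xi:S\to\mathcal{P}(S)$ the projection. A partial projective representation of $\mathcal{G}$ on $S$ is a map $\Gamma:\mathcal{G}\to S$ such that $\xi\Gamma$ is a partial homomorphism, i.e. whenever $\exists xy$: $\xi\Gamma(x^{-1})\xi\Gamma(x)\xi\Gamma(y)=\xi\Gamma(x^{-1})\xi\Gamma(xy)$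 and $\xi\Gamma(x)\xi\Gamma(y)\xi\Gamma(y^{-1})=\xi\Gamma(xy)\xi\Gamma(y^{-1})$. Its factor set is the unique partially defined map $\sigma:\mathcal{G}\times\mathcal{G}\to\mathbb{K}^*$ with $\mathrm{dom}\,\sigma=\{(x,y)\in\mathcal{G}^2:\Gamma(x)\Gamma(y)\ne0\}$ and $\Gamma(x^{-1})\Gamma(x)\Gamma(y)=\Gamma(x^{-1})\Gamma(xy)\sigma(x,y)$, $\Gamma(x)\Gamma(y)\Gamma(y^{-1})=\Gamma(xy)\Gamma(y^{-1})\sigma(x,y)$ for $(x,y)\in\mathrm{dom}\,\sigma$. *)

From HB Require Import structures.
From mathcomp Require Import all_boot all_algebra.
Set Implicit Arguments. Unset Strict Implicit. Unset Printing Implicit Defensive.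
Import GRing.Theory.
Local Open Scope ring_scope.

(** Groupoids: a nonempty set with a partial product, encoded by a total
    function [gmul] that is only meaningful on composable pairs, where
    [x] and [y] are composable iff [d x = r y]. *)
Record groupoid (G : Type) := Groupoid {
  gmul : G -> G -> G;
  ginv : G -> G;
  g_inhabited : inhabited G;
  ginvK : forall x, ginv (ginv x) = x;
  (* (xy)z = x(yz) whenever xy and yz exist; and d(xy)=d y, r(xy)=r x *)
  gmulA : forall x y z,
    gmul (ginv x) x = gmul y (ginv y) ->
    gmul (ginv y) y = gmul z (ginv z) ->
    gmul (gmul x y) z = gmul x (gmul y z);
  gd_mul : forall x y, gmul (ginv x) x = gmul y (ginv y) ->
    gmul (ginv (gmul x y)) (gmul x y) = gmul (ginv y) y;
  gr_mul : forall x y, gmul (ginv x) x = gmul y (ginv y) ->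
    gmul (gmul x y) (ginv (gmul x y)) = gmul x (ginv x);
  gmul_d : forall x, gmul x (gmul (ginv x) x) = x;
  gr_mul_x : forall x, gmul (gmul x (ginv x)) x = x;
  gr_d : forall x, let e := gmul (ginv x) x in gmul e (ginv e) = e;
  gd_d : forall x, let e := gmul (ginv x) x in gmul (ginv e) e = e;
}.

Section GroupoidDefs.
Variables (G : Type) (Gr : groupoid G).
Definition gd (x : G) := gmul Gr (ginv Gr x) x.
Definition gr (x : G) := gmul Gr x (ginv Gr x).
Definition composable (x y : G) : Prop := gd x = gr y.
End GroupoidDefs.

Record ksemigroup (K : fieldType) (S : Type) := KSemigroup {
  smul : S -> S -> S;
  szero : S;
  sscale : K -> S -> S;
  smulA : forall a b c, smul (smul a b) c = smul a (smul b c);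
  smul0s : forall a, smul szero a = szero;
  smuls0 : forall a, smul a szero = szero;
  sscaleA : forall (al be : K) a, sscale al (sscale be a) = sscale (al * be) a;
  sscale1 : forall a, sscale 1 a = a;
  sscale_mull : forall (al : K) a b, sscale al (smul a b) = smul (sscale al a) b;
  sscale_mulr : forall (al : K) a b, sscale al (smul a b) = smul a (sscale al b);
  sscale0 : forall a, sscale 0 a = szero;
}.

Definition kcancellative (K : fieldType) (S : Type) (Sm : ksemigroup K S) : Prop :=
  forall (al be : K) (a : S), a <> szero Sm -> sscale Sm al a = sscale Sm be a -> al = be.

(** The relation lambda: a lambda b iff a = alpha b for some alpha in K^*.
    Equality xi a = xi b in P(S) = S/lambda is exactly [lam a b]. *)
Definition lam (K : fieldType) (S : Type) (Sm : ksemigroup K S) (a b : S) : Prop :=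
  exists al : K, al != 0 /\ a = sscale Sm al b.

(** Partial projective representation: xi o Gamma is a partial homomorphism.
    Products in P(S) are computed on representatives: xi(a) xi(b) = xi(ab). *)
Definition partial_proj_rep (G : Type) (Gr : groupoid G) (K : fieldType) (S : Type)
    (Sm : ksemigroup K S) (Gam : G -> S) : Prop :=
  forall x y, composable Gr x y ->
    lam Sm (smul Sm (smul Sm (Gam (ginv Gr x)) (Gam x)) (Gam y))
           (smul Sm (Gam (ginv Gr x)) (Gam (gmul Gr x y)))
 /\ lam Sm (smul Sm (smul Sm (Gam x) (Gam y)) (Gam (ginv Gr y)))
           (smul Sm (Gam (gmul Gr x y)) (Gam (ginv Gr y))).

Definition fs_dom (G : Type) (Gr : groupoid G) (K : fieldType) (S : Type)
    (Sm : ksemigroup K S) (Gam : G -> S) (x y : G) : Prop :=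
  composable Gr x y /\ smul Sm (Gam x) (Gam y) <> szero Sm.

(** [sigma] is the factor set of Gamma: a total function whose values on
    dom sigma lie in K^* and satisfy the defining equations (values outside
    dom sigma are irrelevant). *)
Definition factor_set (G : Type) (Gr : groupoid G) (K : fieldType) (S : Type)
    (Sm : ksemigroup K S) (Gam : G -> S) (sigma : G -> G -> K) : Prop :=
  forall x y, fs_dom Gr Sm Gam x y ->
    sigma x y != 0
 /\ smul Sm (smul Sm (Gam (ginv Gr x)) (Gam x)) (Gam y)
    = sscale Sm (sigma x y) (smul Sm (Gam (ginv Gr x)) (Gam (gmul Gr x y)))
 /\ smul Sm (smul Sm (Gam x) (Gam y)) (Gam (ginv Gr y))
    = sscale Sm (sigma x y) (smul Sm (Gam (gmul Gr x y)) (Gam (ginv Gr y))).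

From mathcomp Require Import all_boot all_algebra.
Import GRing.Theory.
Set Implicit Arguments. Unset Strict Implicit. Unset Printing Implicit Defensive.

(** The identities r(z), d(z) act trivially on Gamma(z), so the defining
    equations of sigma at (z, d z) and (r z, z) read [u = sigma u] for
    [u = Gamma(z^-1) Gamma(z)], resp. [u = Gamma(z) Gamma(z^-1)], and
    K-cancellativity gives sigma = 1 once u <> 0.  That u <> 0 follows from
    Gamma(z) <> 0, because the partial homomorphism property at
    (z, z^-1) makes Gamma(z) Gamma(z^-1) Gamma(z) a nonzero multiple of
    Gamma(r z) Gamma(z) = Gamma(z). *)

Section KSemigroupFacts.
Variables (K : fieldType) (S : Type) (Sm : ksemigroup K S).

Lemma sscales0 (al : K) : sscale Sm al (szero Sm) = szero Sm.
Proof. by have := sscale_mull Sm al (szero Sm) (szero Sm); rewrite smul0s smuls0. Qed.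

Lemma smul_neq0l (a b : S) : smul Sm a b <> szero Sm -> a <> szero Sm.
Proof. by move=> nz a0; apply: nz; rewrite a0 smul0s. Qed.

Lemma smul_neq0r (a b : S) : smul Sm a b <> szero Sm -> b <> szero Sm.
Proof. by move=> nz b0; apply: nz; rewrite b0 smuls0. Qed.

Lemma lam_neq0 (a b : S) : lam Sm a b -> b <> szero Sm -> a <> szero Sm.
Proof.
move=> [al [al0 ->]] b0 ab0; apply: b0.
by rewrite -[b](sscale1 Sm) -(mulVf al0) -sscaleA ab0 sscales0.
Qed.

Lemma kcancellative_fixed_eq1 (a : S) (al : K) :
  kcancellative Sm -> a <> szero Sm -> a = sscale Sm al a -> al = 1%R.
Proof. by move=> canc a0 E; apply: (canc _ _ _ a0); rewrite sscale1 -E. Qed.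

End KSemigroupFacts.

Section GroupoidFacts.
Variables (G : Type) (Gr : groupoid G).

Lemma composable_gd (x : G) : composable Gr x (gd Gr x).
Proof. exact/esym/(gr_d Gr x). Qed.

Lemma composable_gr (x : G) : composable Gr (gr Gr x) x.
Proof. by have := gd_d Gr (ginv Gr x); rewrite /= ginvK. Qed.

Lemma composable_ginv (x : G) : composable Gr x (ginv Gr x).
Proof. by rewrite /composable /gd /gr ginvK. Qed.

End GroupoidFacts.

Section IdentityFactors.
Variables (G : Type) (Gr : groupoid G) (K : fieldType) (S : Type).
Variables (Sm : ksemigroup K S) (Gam : G -> S) (sigma : G -> G -> K).
Hypothesis Hcanc : kcancellative Sm.
Hypothesis Hppr : partial_proj_rep Gr Sm Gam.
Hypothesis Hfs : factor_set Gr Sm Gam sigma.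
Hypothesis Hunit : forall x, smul Sm (Gam (gr Gr x)) (Gam x) = Gam x
                          /\ Gam x = smul Sm (Gam x) (Gam (gd Gr x)).

Variables (z : G) (Hz : Gam z <> szero Sm).

Lemma fs_dom_gd : fs_dom Gr Sm Gam z (gd Gr z).
Proof. by split; [exact: composable_gd | rewrite -(Hunit z).2]. Qed.

Lemma fs_dom_gr : fs_dom Gr Sm Gam (gr Gr z) z.
Proof. by split; [exact: composable_gr | rewrite (Hunit z).1]. Qed.

Lemma Gam_mul_inv_mul_neq0 : smul Sm (smul Sm (Gam z) (Gam (ginv Gr z))) (Gam z) <> szero Sm.
Proof.
have [_ lam_zz'z] := Hppr (composable_ginv Gr z).
rewrite ginvK -/(gr Gr z) (Hunit z).1 in lam_zz'z.
exact: lam_neq0 lam_zz'z Hz.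
Qed.

Lemma sigma_gd : sigma z (gd Gr z) = 1%R.
Proof.
have [_ [E _]] := Hfs fs_dom_gd.
rewrite smulA -(Hunit z).2 {2}/gd gmul_d in E.
apply: kcancellative_fixed_eq1 Hcanc _ E.
by apply: (@smul_neq0r _ _ _ (Gam z)); rewrite -smulA; exact: Gam_mul_inv_mul_neq0.
Qed.

Lemma sigma_gr : sigma (gr Gr z) z = 1%R.
Proof.
have [_ [_ E]] := Hfs fs_dom_gr.
rewrite (Hunit z).1 {2}/gr gr_mul_x in E.
exact: kcancellative_fixed_eq1 Hcanc (smul_neq0l Gam_mul_inv_mul_neq0) E.
Qed.

End IdentityFactors.

Theorem mainTheorem9 (G : Type) (Gr : groupoid G) (K : fieldType) (S : Type)
  (Sm : ksemigroup K S) (Hcanc : kcancellative Sm)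
  (Gam : G -> S) (Hppr : partial_proj_rep Gr Sm Gam)
  (sigma : G -> G -> K) (Hfs : factor_set Gr Sm Gam sigma)
  (Hunit : forall x, smul Sm (Gam (gr Gr x)) (Gam x) = Gam x
                  /\ Gam x = smul Sm (Gam x) (Gam (gd Gr x)))
  (x y : G) (Hxy : fs_dom Gr Sm Gam x y) :
  fs_dom Gr Sm Gam x (gd Gr x) /\ fs_dom Gr Sm Gam (gr Gr y) y /\
  sigma x (gd Gr x) = 1%R /\ sigma (gr Gr x) x = 1%R /\
  sigma y (gd Gr y) = 1%R /\ sigma (gr Gr y) y = 1%R.
Proof.
have [_ Gxy_neq0] := Hxy.
have Gx_neq0 := smul_neq0l Gxy_neq0.
have Gy_neq0 := smul_neq0r Gxy_neq0.
split; first exact: fs_dom_gd Hunit _ Gx_neq0.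
split; first exact: fs_dom_gr Hunit _ Gy_neq0.
split; first exact: sigma_gd Hcanc Hppr Hfs Hunit _ Gx_neq0.
split; first exact: sigma_gr Hcanc Hppr Hfs Hunit _ Gx_neq0.
split; first exact: sigma_gd Hcanc Hppr Hfs Hunit _ Gy_neq0.
exact: sigma_gr Hcanc Hppr Hfs Hunit _ Gy_neq0.
Qed.
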